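(* ($I\Sigma_1$) Let $n,k\in\mathbb{N}$. If a finite set $X\subseteq\mathbb{N}$ is $\omega^{n+6k}$-large and $\omega^3$-sparse, then $X$ admits an $(\omega^n,\omega^k)$-grouping for $\min X$ colors.
   Context: $\alpha$-largeness for $\alpha<\omega^\omega$: writing ordinals in Cantor normal form, $0[m]=0$, $(\beta+1)[m]=\beta$, $(\beta+\omega^n)[m]=\beta+\omega^{n-1}\cdot m$ for $n\ge1$; a finite $\{x_0<\dots<x_{\ell-1}\}$ is $\alpha$-large if $\alpha[x_0]\cdots[x_{\ell-1}]=0$. $X$ is \emph{$\alpha$-sparse} if $\min X>3$ and for all $x<y$ in $X$ the interval $[x,y)$ is $\alpha$-large. For $P:[X]^2\to\{0,\dots,\min X-1\}$, a finite sequence $\langle F_i\subseteq X: i<l\rangle$ of finite sets is an \emph{$(\alpha,\beta)$-grouping for $P$} if: $\max F_i<\min F_j$ for $i<j<l$; each $F_i$ is $\alpha$-large; $\{\max F_i: i<l\}$ is $\beta$-large; and for all $i<j<l$, $x,x'\in F_i$, $y,y'\in F_j$, $P(x,y)=P(x',y')$. $X$ \emph{admits an $(\alpha,\beta)$-grouping for $k$ colors} if every $P:[X]^2\to\{0,\dots,k-1\}$ has an $(\alpha,\beta)$-grouping. *)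

From mathcomp Require Import all_boot.
Set Implicit Arguments. Unset Strict Implicit. Unset Printing Implicit Defensive.

(* Ordinals below omega^omega in Cantor normal form
   alpha = omega^{e_1} + ... + omega^{e_m}, e_1 >= ... >= e_m,
   represented by the list of exponents in NONDECREASING order
   [:: e_m; ...; e_1] (smallest, i.e. last CNF term, first).
   The empty list is the ordinal 0. *)
Definition cnf := seq nat.

Definition opow (n : nat) : cnf := [:: n].

(* Fundamental sequence:  0[m] = 0, (b+1)[m] = b,
   (b + omega^(n+1))[m] = b + omega^n * m. *)
Definition fs (a : cnf) (m : nat) : cnf :=
  match a with
  | [::] => [::]
  | 0 :: t => t
  | n.+1 :: t => nseq m n ++ t
  end.

(* A finite set of naturals is represented by its increasing enumeration
   (a strictly increasing seq). {x_0 < ... < x_{l-1}} is a-large iff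
   a[x_0]...[x_{l-1}] = 0. *)
Definition large (a : cnf) (s : seq nat) : bool :=
  foldl fs a s == [::].

Definition fin_set (X : seq nat) : bool := sorted ltn X.

Definition interval_co (x y : nat) : seq nat := iota x (y - x).

Definition sparse (a : cnf) (X : seq nat) : Prop :=
  (forall x, x \in X -> 3 < x) /\
  (forall x y, x \in X -> y \in X -> x < y -> large a (interval_co x y)).

Definition grouping (a b : cnf) (X : seq nat) (P : nat -> nat -> nat)
    (Fs : seq (seq nat)) : Prop :=
  (forall i, i < size Fs ->
     fin_set (nth [::] Fs i) /\ {subset nth [::] Fs i <= X} /\
     nth [::] Fs i != [::] /\ large a (nth [::] Fs i)) /\
  (forall i j, i < j < size Fs ->
     last 0 (nth [::] Fs i) < head 0 (nth [::] Fs j)) /\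
  large b [seq last 0 F | F <- Fs] /\
  (forall i j, i < j < size Fs ->
     forall x x' y y', x \in nth [::] Fs i -> x' \in nth [::] Fs i ->
       y \in nth [::] Fs j -> y' \in nth [::] Fs j -> P x y = P x' y').

(* X admits an (a,b)-grouping for k colors: every P : [X]^2 -> {0,..,k-1}
   (only its values on pairs x < y of X matter) has an (a,b)-grouping. *)
Definition admits_grouping (a b : cnf) (k : nat) (X : seq nat) : Prop :=
  forall P : nat -> nat -> nat,
    (forall x y, x \in X -> y \in X -> x < y -> P x y < k) ->
    exists Fs, grouping a b X P Fs.

From mathcomp Require Import all_boot zify.
Set Implicit Arguments. Unset Strict Implicit. Unset Printing Implicit Defensive.

(* Exactly omega^m-large sets have a tree shape that turns largeness arguments
   into combinatorics.  The key tool is a pigeonhole principle for largeness: if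
   (C+1)^2 (x+1) <= y for all x < y in Z, then any C-colouring of more than C
   consecutive exactly omega^m-large blocks of Z has a monochromatic exactly
   omega^m-large subset.  Colouring y by the base-c code of the colours P x y,
   x ranging over a set of earlier points, yields few enough colours once X is
   omega^3-sparse; this gives first end-homogeneous and then homogeneous
   families, hence an (omega^n, omega)-grouping inside every exactly
   omega^(n+5)-large subset of X.  By induction on k, each group of an
   (omega^(n+6), omega^k)-grouping is then refined to an (omega^n, omega)-grouping,
   and the omega-large sets of last elements of the refinements combine into an
   omega^(k+1)-large one. *)

Section SeqFacts.
Variable T : eqType.

Lemma subseq_flatten (ss ts : seq (seq T)) : subseq ss ts -> subseq (flatten ss) (flatten ts).
Proof.
elim: ts ss => [|t ts IHts] [|s ss] //=; rewrite ?sub0seq //.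
case: eqP => [-> | _] sub_ss; first by rewrite cat_subseq ?IHts.
exact: subseq_trans (IHts _ sub_ss) (suffix_subseq _ _).
Qed.

Lemma head_in x0 (s : seq T) : s != [::] -> head x0 s \in s.
Proof. by case: s => // x s _; apply: mem_head. Qed.

Lemma last_in x0 (s : seq T) : s != [::] -> last x0 s \in s.
Proof. by case: s => // x s _; rewrite /= mem_last. Qed.

Lemma subseq_cons2 (x : T) s t : subseq (x :: s) (x :: t) = subseq s t.
Proof. by rewrite /= eqxx. Qed.

Lemma mem_subseq_flatten (ss : seq (seq T)) s : s \in ss -> subseq s (flatten ss).
Proof.
elim: ss => //= s' ss IHss; rewrite inE => /predU1P [-> | /IHss sub_s]; first exact: prefix_subseq.
exact: subseq_trans sub_s (suffix_subseq _ _).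
Qed.

Lemma subseq_flatten_all2 (ss ts : seq (seq T)) :
  all2 subseq ss ts -> subseq (flatten ss) (flatten ts).
Proof. by elim: ss ts => [|s ss IHss] [|t ts] //= /andP [st /IHss]; apply: cat_subseq. Qed.

Lemma size_all2 (r : rel T) s t : all2 r s t -> size s = size t.
Proof. by elim: s t => [|x s IHs] [|y t] //= /andP [_ /IHs ->]. Qed.

Lemma pair_choice (U : eqType) (R : T -> U -> Prop) (s : seq T) :
  (forall x, x \in s -> exists y, R x y) ->
  exists2 ps : seq (T * U), map fst ps = s & forall p, p \in ps -> R p.1 p.2.
Proof.
elim: s => [|x s IHs] Hs; first by exists [::].
have [y Rxy] := Hs x (mem_head _ _).
have [|ps <- Hps] := IHs; first by move=> x' Hx'; apply: Hs; rewrite inE Hx' orbT.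
by exists ((x, y) :: ps) => // p; rewrite inE => /predU1P [-> | /Hps].
Qed.

Variables (leT : rel T).
Hypothesis leT_tr : transitive leT.

Lemma sorted_cat_rel s1 s2 : sorted leT (s1 ++ s2) -> {in s1 & s2, forall x y, leT x y}.
Proof. by rewrite (sorted_pairwise leT_tr) pairwise_cat => /and3P [/allrelP]. Qed.

Lemma sorted_subset_subseq s t : irreflexive leT ->
  sorted leT s -> sorted leT t -> {subset s <= t} -> subseq s t.
Proof.
move=> leT_irr s_sorted t_sorted sub_st.
apply/subseq_uniqP; first exact: sorted_uniq t_sorted.
apply: (irr_sorted_eq leT_tr leT_irr) => //; first exact: sorted_filter.
by move=> x; rewrite mem_filter; case: (boolP (x \in s)) => //= /sub_st ->.
Qed.

End SeqFacts.

(* Only the shape is described: a singleton for m = 0, and otherwise an element x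
   followed by x blocks that are exactly omega^(m-1)-large; sortedness is kept separately. *)
Fixpoint exactly_large (m : nat) (s : seq nat) : Prop :=
  match m with
  | 0 => size s = 1
  | m'.+1 =>
    if s is x :: t then
      exists bs, [/\ size bs = x, flatten bs = t & forall b, b \in bs -> exactly_large m' b]
    else False
  end.

Lemma exactly_large_neq0 m s : exactly_large m s -> s != [::].
Proof. by case: m => [|m]; case: s. Qed.

Lemma exactly_large1 s : exactly_large 1 (size s :: s).
Proof.
exists [seq [:: x] | x <- s]; split; rewrite ?size_map ?flatten_seq1 //.
by move=> b /mapP [x _ ->].
Qed.

Lemma foldl_fs_exactly_large m g s r :
  exactly_large m s -> foldl fs (m :: g) (s ++ r) = foldl fs g r.
Proof.
elim: m g s r => [|m IHm] g s r; first by case: s => [|x [|]].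
case: s => [|x _] //= [bs [<- <- Hbs]].
elim: bs Hbs g => [|b bs IHbs] //= Hbs g.
rewrite -catA IHm; last exact/Hbs/mem_head.
by apply: IHbs => b' Hb'; apply: Hbs; rewrite inE Hb' orbT.
Qed.

Lemma exactly_large_large m s : exactly_large m s -> large (opow m) s.
Proof. by move=> Hs; rewrite /large -[s]cats0 foldl_fs_exactly_large. Qed.

Lemma foldl_fs_exactly_prefix m g s : foldl fs (m :: g) s = [::] ->
  exists p r, [/\ s = p ++ r, exactly_large m p & foldl fs g r = [::]].
Proof.
elim: m g s => [|m IHm] g [|x s] //= Hs; first by exists [:: x], s.
suff [bs [r [Hbs Hs' Hr Hg]]] : exists bs r, [/\ size bs = x, s = flatten bs ++ r,
    (forall b, b \in bs -> exactly_large m b) & foldl fs g r = [::]].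
  by exists (x :: flatten bs), r; split; rewrite ?Hs' //; exists bs.
elim: x g s Hs => [|x IHx] g s Hs; first by exists [::], s.
have [p [r1 [-> Hp /IHx [bs [r [Hbs -> Hbs' Hr]]]]]] := IHm _ _ Hs.
exists (p :: bs), r; split; rewrite /= ?Hbs ?catA //.
by move=> b; rewrite inE => /predU1P [->|/Hbs'].
Qed.

Lemma large_exactly_prefix m s :
  large (opow m) s -> exists p r, s = p ++ r /\ exactly_large m p.
Proof. by move/eqP/foldl_fs_exactly_prefix => [p [r [-> Hp _]]]; exists p, r. Qed.

Lemma exactly_large_subseq m j s :
  exactly_large (m + j) s -> 0 \notin s -> exists2 t, exactly_large m t & subseq t s.
Proof.
elim: j s => [|j IHj] s; first by rewrite addn0 => Hs _; exists s.
rewrite addnS; case: s => [|x _] // [[|b bs] [<- <- Hbs]]; first by rewrite inE.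
have sub_b : subseq b (size (b :: bs) :: flatten (b :: bs)).
  exact: subseq_trans (prefix_subseq _ _) (subseq_cons _ _).
move=> /(contra (@mem_subseq _ _ _ sub_b 0)) Hb0.
have [t Ht sub_t] := IHj b (Hbs b (mem_head _ _)) Hb0.
by exists t; last exact: subseq_trans sub_t sub_b.
Qed.

Lemma exactly_large_concat k (ps : seq (nat * seq nat)) :
  exactly_large k (map fst ps) ->
  (forall p, p \in ps -> exactly_large 1 p.2 /\ head 0 p.2 <= p.1) ->
  exists2 t, subseq t (flatten (map snd ps)) & exactly_large k.+1 t.
Proof.
elim: k ps => [|k IHk] [|[g a] ps] // Hg Hps.
  have [Ha _] := Hps (g, a) (mem_head _ _).
  by case: ps Hg {Hps} => [_ | ? ? [] //]; exists a; rewrite /= ?cats0.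
case: Hg => bs [size_bs Hbs bs_large]; rewrite /= in size_bs.
have {}Hbs : flatten bs = map fst ps := Hbs.
have [] := Hps (g, a) (mem_head _ _); case: a Hps => [|h a'] Hps // Ha /= h_le.
set Rs := reshape (shape bs) ps.
have ps_Rs : ps = flatten Rs.
  by rewrite reshapeKr // -size_flatten Hbs size_map.
have Rs_bs : map (map fst) Rs = bs by rewrite map_reshape -Hbs flattenK.
have size_Rs : size Rs = g by rewrite size_reshape size_map.
have [|qs qs_Rs Hqs] := @pair_choice _ _
    (fun R U => subseq U (flatten (map snd R)) /\ exactly_large k.+1 U) (take h Rs).
  move=> R /mem_take R_Rs; have [||U sub_U U_large] := IHk R; last by exists U.
    by apply: bs_large; rewrite -Rs_bs map_f.
  by move=> p p_R; apply: Hps; rewrite inE ps_Rs; apply/orP; right; apply/flattenP; exists R.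
have sub_qs : subseq (flatten (map snd qs)) (flatten (map (flatten \o map snd) (take h Rs))).
  rewrite -qs_Rs; apply: subseq_flatten_all2; elim: qs Hqs {qs_Rs} => //= q qs IHqs Hqs.
  by rewrite (proj1 (Hqs q (mem_head _ _))) IHqs // => q' Hq'; apply: Hqs; rewrite inE Hq' orbT.
have flatten_Rs : flatten (map snd (flatten Rs)) = flatten (map (flatten \o map snd) Rs).
  by elim: (Rs) => //= R Rs' <-; rewrite map_cat flatten_cat.
exists (h :: flatten (map snd qs)).
  rewrite /= eqxx (subseq_trans _ (suffix_subseq a' _)) // ps_Rs flatten_Rs.
  exact: subseq_trans sub_qs (subseq_flatten (map_subseq _ (take_subseq _ _))).
exists (map snd qs); split => //.
  by rewrite size_map -(size_map fst) qs_Rs size_takel // size_Rs.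
by move=> U /mapP [q /Hqs [_ ?] ->].
Qed.


Section Iterate.
Variable f : nat -> nat.
Hypothesis f_infl : forall z, z <= f z.

Lemma iter_infl n x : x <= iter n f x.
Proof. by elim: n => //= n IHn; apply: leq_trans IHn (f_infl _). Qed.

Lemma iter_mono_count n n' x : n <= n' -> iter n f x <= iter n' f x.
Proof.
move=> /subnKC <-; elim: (n' - n) => [|d IHd]; first by rewrite addn0.
by rewrite addnS; apply: leq_trans IHd (f_infl _).
Qed.

End Iterate.

Lemma iter_mono_arg f n x y :
  {homo f : a b / a <= b} -> x <= y -> iter n f x <= iter n f y.
Proof. by move=> f_mono Hxy; elim: n => //= n IHn; apply: f_mono. Qed.

Fixpoint hardy (m a : nat) : nat :=
  if m is m'.+1 then iter a (fun z => hardy m' z.+1) a else a.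

Lemma leq_hardy m a : a <= hardy m a.
Proof.
elim: m a => //= m IHm a; apply: iter_infl => z.
exact: leq_trans (leqnSn z) (IHm _).
Qed.

Lemma hardy_mono m : {homo hardy m : a b / a <= b}.
Proof.
elim: m => //= m IHm a b Hab.
have infl z : z <= hardy m z.+1 by exact: leq_trans (leqnSn z) (leq_hardy _ _).
apply: leq_trans (iter_mono_count infl _ Hab).
by apply: iter_mono_arg => // u v Huv; apply: IHm.
Qed.

Lemma exactly_large_hardy m s :
  exactly_large m s -> sorted ltn s -> hardy m (head 0 s) <= last 0 s.
Proof.
elim: m s => [|m IHm] [|x0 t] //=; first by case: t.
move=> [bs [<- <- Hbs]]; move: {1 3 4}(size bs) => x.
elim: bs x Hbs => [|[|y b] bs IHbs] x Hbs /= Hsort //.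
  by have /exactly_large_neq0 := Hbs _ (mem_head _ _).
move: Hsort; rewrite cat_path /= => /and3P [Hxy Hb Hbs_path].
have Hyb : hardy m y <= last y b by exact: IHm (y :: b) (Hbs _ (mem_head _ _)) Hb.
rewrite -[hardy m _.+1]/(iter (size bs).+1 (fun z => hardy m z.+1) x) iterSr last_cat.
apply: leq_trans (IHbs _ _ Hbs_path); last first.
  by move=> b' Hb'; apply: Hbs; rewrite inE Hb' orbT.
apply: iter_mono_arg; first by move=> u v Huv; apply: hardy_mono.
exact: leq_trans (hardy_mono m Hxy) Hyb.
Qed.

(* color_bound M bounds the number c ^ k of codes of k <= M.+1 colours below c <= M;
   gap x is the spacing the pigeonhole lemma needs for that many colours. *)
Definition color_bound (x : nat) := 2 ^ (x * x.+1).

Definition gap (x : nat) := (color_bound x).+1 ^ 2 * x.+1.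

Lemma color_bound_mono : {homo color_bound : x y / x <= y}.
Proof. by move=> x y Hxy; apply: leq_pexp2l => //; apply: leq_mul. Qed.

Lemma expn_le_color_bound c M k : 0 < c -> c <= M -> k <= M.+1 -> c ^ k <= color_bound M.
Proof.
move=> c_gt0 cM kM; apply: leq_trans (leq_pexp2l c_gt0 kM) _.
by rewrite /color_bound expnM leq_exp2r // (leq_trans cM) // ltnW // ltn_expl.
Qed.

Lemma color_bound_lt_gap x : color_bound x < gap x.
Proof. by rewrite /gap -mulnn -mulnA leq_pmulr. Qed.

Lemma hardy2_ge a : 2 ^ a * a <= hardy 2 a.
Proof.
have hardy1E w : hardy 1 w = w + w by rewrite /= iter_succn.
change (2 ^ a * a <= iter a (fun z => hardy 1 z.+1) a); move: {2 4}a => z.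
elim: a => [|a IHa]; first by rewrite mul1n.
by rewrite iterS hardy1E expnS; lia.
Qed.

Lemma tower_le_hardy3 x : 3 <= x -> 2 ^ 2 ^ 2 ^ x <= hardy 3 x.
Proof.
move=> x_ge3.
have step z : 2 ^ z <= hardy 2 z.+1.
  by apply: leq_trans (hardy2_ge _); rewrite expnS; nia.
have infl z : z <= hardy 2 z.+1 by exact: leq_trans (ltnW (ltn_expl _ _)) (step z).
apply: leq_trans (iter_mono_count infl _ x_ge3).
rewrite (_ : iter 3 _ x = hardy 2 (hardy 2 (hardy 2 x.+1).+1).+1) //.
apply: leq_trans (step _); rewrite leq_pexp2l //.
by apply: leq_trans (step _); rewrite leq_pexp2l.
Qed.

Lemma gap_le_tower x : 4 <= x -> gap x <= 2 ^ 2 ^ 2 ^ x.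
Proof.
move=> x_ge4; set k := x * x.+1.
have bound_color : (color_bound x).+1 <= 2 ^ k.+1.
  by rewrite /color_bound -/k expnS; have := ltn_expl k (isT : 1 < 2); lia.
have quadratic : 2 * k.+1 + x <= 2 ^ (2 * x).
  rewrite /k -(subnKC (ltnW x_ge4)); elim: (x - 3) => [|d IHd] //.
  have -> : 2 ^ (2 * (3 + d.+1)) = 4 * 2 ^ (2 * (3 + d)) by rewrite addnS mulnS expnD.
  nia.
have lin y : 2 * y <= 2 ^ y.
  by elim: y => // y IHy; rewrite expnS; have := ltn_expl y (isT : 1 < 2); lia.
apply: (@leq_trans (2 ^ (2 * k.+1 + x))).
  rewrite /gap expnD (mulnC 2) expnM; apply: leq_mul; first by rewrite leq_exp2r.
  exact: ltn_expl.
apply: leq_trans (leq_pexp2l _ quadratic) _ => //.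
by apply: leq_pexp2l => //; apply: leq_pexp2l => //; apply: lin.
Qed.

Lemma sparse3_hardy X :
  sparse (opow 3) X -> {in X &, forall x y, x < y -> hardy 3 x < y}.
Proof.
case=> _ Hsp x y Hx Hy Hxy.
have [p [r [Hpr Hp]]] := large_exactly_prefix (Hsp x y Hx Hy Hxy).
have p_sorted : sorted ltn p.
  by apply: (subseq_sorted ltn_trans (prefix_subseq p r)); rewrite -Hpr iota_ltn_sorted.
case: p Hpr Hp p_sorted => [|a p] Hpr Hp p_sorted; first by have := exactly_large_neq0 Hp.
have /= Ha := exactly_large_hardy Hp p_sorted.
have last_in : last a p \in interval_co x y by rewrite Hpr mem_cat mem_last.
move: Hpr last_in Ha; rewrite /interval_co -subnSK // => -[<- _].
by rewrite mem_iota; lia.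
Qed.

Lemma sparse3_gap X : sparse (opow 3) X -> {in X &, forall x y, x < y -> gap x <= y}.
Proof.
move=> Hsp x y Hx Hy Hxy; have x_ge4 : 4 <= x by case: Hsp => /(_ x Hx).
apply: leq_trans (gap_le_tower x_ge4) _.
exact: ltnW (leq_ltn_trans (tower_le_hardy3 (ltnW x_ge4)) (sparse3_hardy Hsp Hx Hy Hxy)).
Qed.

Lemma majority_color C s : {in s, forall x, x < C.+1} ->
  exists2 j, j < C.+1 & size s <= C.+1 * count_mem j s.
Proof.
elim: C s => [|C IHC] s col_s.
  exists 0 => //; rewrite mul1n.
  have : all (pred1 0) s by apply/allP => x /col_s; rewrite ltnS leqn0.
  by rewrite all_count => /eqP ->.
case: (leqP (size s) (C.+2 * count_mem C.+1 s)) => [|few]; first by exists C.+1.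
set s' := [seq x <- s | x != C.+1].
have [j j_lt Hj] : exists2 j, j < C.+1 & size s' <= C.+1 * count_mem j s'.
  apply: IHC => x; rewrite mem_filter => /andP [x_neq /col_s].
  by rewrite ltnS leq_eqVlt (negbTE x_neq).
have count_j : count_mem j s' = count_mem j s.
  rewrite count_filter; apply: eq_count => x /=.
  by case: eqP => //= ->; rewrite (ltn_eqF j_lt).
have size_s : size s' + count_mem C.+1 s = size s.
  by rewrite size_filter -(count_predC (pred1 C.+1) s) addnC.
exists j; first exact: ltnW.
rewrite count_j in Hj; have : count_mem C.+1 s < count_mem j s; nia.
Qed.

Lemma gap_count C e d n : C.+1 ^ 2 * e.+1 <= d -> d %/ C.+1 <= C * n -> e < n.
Proof.
rewrite -mulnn => gap_e /(leq_trans _) count_n; have := count_n (C.+1 * e.+1).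
by rewrite leq_divRL //; nia.
Qed.

Section Monochromatic.
Variables (C : nat) (col : nat -> nat) (Z : seq nat).
Hypothesis C_gt0 : 0 < C.
Hypothesis Z_sorted : sorted ltn Z.
Hypothesis col_lt : {in Z, forall z, col z < C}.
Hypothesis Z_gtC : {in Z, forall z, C < z}.
Hypothesis Z_gap : {in Z &, forall x y, x < y -> C.+1 ^ 2 * x.+1 <= y}.

Lemma mono_extend m Y j e Ls : sorted ltn Y -> e \in Y -> col e = j -> e < size Ls ->
  subseq (flatten Ls) Y -> {in flatten Ls, forall z, e < z} ->
  (forall S, S \in Ls -> exactly_large m S) -> {in flatten Ls, forall z, col z = j} ->
  exists2 S, subseq S Y & exactly_large m.+1 S /\ {in S &, forall x y, col x = col y}.
Proof.
move=> Y_sorted e_Y col_e e_Ls sub_Ls e_lt Ls_large Ls_col.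
set T := take e Ls; have sub_T : subseq (flatten T) (flatten Ls).
  exact: subseq_flatten (take_subseq _ _).
exists (e :: flatten T); last split.
- apply: (sorted_subset_subseq ltn_trans ltnn) => //; last first.
    by move=> z; rewrite inE => /predU1P [-> // | /(mem_subseq (subseq_trans sub_T sub_Ls))].
  rewrite /= path_sortedE; last exact: ltn_trans.
  rewrite ((subseq_sorted ltn_trans) _ _ (subseq_trans sub_T sub_Ls) Y_sorted) andbT.
  by apply/allP => z /(mem_subseq sub_T)/e_lt.
- exists T; split => //; first by rewrite size_takel // ltnW.
  by move=> S /mem_take; apply: Ls_large.
- suff col_j z : z \in e :: flatten T -> col z = j by move=> x y /col_j -> /col_j ->.
  by rewrite inE => /predU1P [-> | /(mem_subseq sub_T)/Ls_col].
Qed.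

Section Step.
Variable m : nat.
Hypothesis IHm : forall Bs, C < size Bs -> (forall b, b \in Bs -> exactly_large m b) ->
  subseq (flatten Bs) Z ->
  exists2 S, subseq S (flatten Bs) & exactly_large m S /\ {in S &, forall x y, col x = col y}.

Lemma mono_chunks Es : (forall b, b \in Es -> exactly_large m b) -> subseq (flatten Es) Z ->
  exists2 L, size L = size Es %/ C.+1 & subseq (flatten L) (flatten Es) /\
    forall S, S \in L -> exactly_large m S /\ {in S &, forall x y, col x = col y}.
Proof.
elim: {Es}(size Es) {-2}Es (leqnn (size Es)) => [|N IHN] Es size_Es Es_large Es_sub.
  by exists [::]; rewrite ?sub0seq //; move: size_Es; rewrite leqn0 => /eqP ->.
case: (ltnP (size Es) C.+1) => [small | big]; first by exists [::]; rewrite ?divn_small ?sub0seq.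
set E1 := take C.+1 Es; set E2 := drop C.+1 Es.
rewrite -(cat_take_drop C.+1 Es) -/E1 -/E2 in Es_large Es_sub.
have in_E1 b : b \in E1 -> exactly_large m b by move=> Hb; apply: Es_large; rewrite mem_cat Hb.
have in_E2 b : b \in E2 -> exactly_large m b by move=> Hb; apply: Es_large; rewrite mem_cat Hb orbT.
rewrite flatten_cat in Es_sub.
have size_E1 : C < size E1 by rewrite size_takel.
have [S sub_S S_mono] := IHm size_E1 in_E1 (subseq_trans (prefix_subseq _ _) Es_sub).
have [|L size_L [sub_L L_mono]] := IHN E2 _ in_E2 (subseq_trans (suffix_subseq _ _) Es_sub).
  by rewrite size_drop; lia.
exists (S :: L); first by rewrite /= size_L size_drop -{2}(subnKC big) divnDl // divnn add1n.
split; first by rewrite -(cat_take_drop C.+1 Es) flatten_cat /= cat_subseq.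
by move=> S'; rewrite inE => /predU1P [-> //|/L_mono].
Qed.

Lemma mono_majority Es : (forall b, b \in Es -> exactly_large m b) -> subseq (flatten Es) Z ->
  exists j, exists2 Ls, subseq (flatten Ls) (flatten Es) &
    [/\ size Es %/ C.+1 <= C * size Ls, forall S, S \in Ls -> exactly_large m S
      & {in flatten Ls, forall z, col z = j}].
Proof.
move=> Es_large Es_sub; have [L size_L [sub_L L_mono]] := mono_chunks Es_large Es_sub.
have L_Z S : S \in L -> {subset S <= Z}.
  by move=> HS z Hz; apply: (mem_subseq (subseq_trans sub_L Es_sub)); apply/flattenP; exists S.
have head_S S : S \in L -> head 0 S \in S by case/L_mono => /exactly_large_neq0/head_in.
pose color S := col (head 0 S).
have [j _ Hj] : exists2 j, j < C.-1.+1 & size L <= C.-1.+1 * count_mem j (map color L).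
  rewrite -(size_map color); apply: majority_color => _ /mapP [S HS ->].
  by rewrite prednK // col_lt // (L_Z S) // head_S.
rewrite prednK // in Hj.
exists j, [seq S <- L | color S == j].
  exact: subseq_trans (subseq_flatten (filter_subseq _ _)) sub_L.
split.
- by rewrite -size_L size_filter; rewrite count_map in Hj.
- by move=> S; rewrite mem_filter => /andP [_ /L_mono []].
- move=> z /flattenP [S]; rewrite mem_filter => /andP [/eqP <- HS] Hz.
  by have [_ S_mono] := L_mono S HS; apply: S_mono; rewrite ?head_S.
Qed.

(* [A] lists one witness (colour, element) for each colour met so far, each witness lying
   below all remaining blocks. *)
Lemma mono_witnesses Y : subseq Y Z -> forall Bs (A : seq (nat * nat)),
  (forall b, b \in Bs -> exactly_large m.+1 b) -> subseq (flatten Bs) Y ->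
  uniq (map fst A) -> {in A, forall p, col p.2 = p.1 /\ p.2 \in Y} ->
  {in A & flatten Bs, forall p z, p.2 < z} -> C < size Bs + size A ->
  exists2 S, subseq S Y & exactly_large m.+1 S /\ {in S &, forall x y, col x = col y}.
Proof.
move=> Y_sub; have Y_sorted := (subseq_sorted ltn_trans) _ _ Y_sub Z_sorted.
elim=> [|D Bs IHBs] A Bs_large Bs_sub A_uniq A_col A_lt size_BA.
  move: size_BA; rewrite add0n -(size_map fst) ltnNge => /negP []; rewrite -[C](size_iota 0).
  apply: uniq_leq_size => // _ /mapP [p Hp ->]; have [<- pY] := A_col p Hp.
  by rewrite mem_iota col_lt ?(mem_subseq Y_sub).
have := Bs_large D (mem_head _ _); rewrite /= addSn in size_BA.
case: D Bs_large Bs_sub A_lt => [|d t] // Bs_large Bs_sub A_lt [Es [size_Es Et Es_large]]; subst t.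
have sorted_DBs : sorted ltn (d :: flatten Es ++ flatten Bs).
  exact: (subseq_sorted ltn_trans) Bs_sub Y_sorted.
have Es_Y : subseq (flatten Es) Y.
  exact: subseq_trans (subseq_trans (prefix_subseq _ _) (subseq_cons _ d)) Bs_sub.
have d_Y : d \in Y by apply: (mem_subseq Bs_sub); rewrite mem_head.
have [j [Ls sub_Ls [size_Ls Ls_large Ls_col]]] := mono_majority Es_large (subseq_trans Es_Y Y_sub).
have Ls_Es z : z \in flatten Ls -> z \in flatten Es by apply: mem_subseq.
case: (boolP (j \in map fst A)) => [/mapP [[j' e] He /= Hj] | j_new].
  subst j'; have [/= col_e e_Y] := A_col _ He; have /= e_lt := A_lt _ _ He.
  apply: (mono_extend Y_sorted e_Y col_e _ (subseq_trans sub_Ls Es_Y)) => //.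
  - have e_lt_d : e < d by rewrite e_lt ?mem_head.
    have := Z_gap (mem_subseq Y_sub e_Y) (mem_subseq Y_sub d_Y) e_lt_d.
    by rewrite -size_Es => /gap_count; apply.
  - by move=> z /Ls_Es Hz; rewrite e_lt // inE mem_cat Hz orbT.
have [e e_Ls] : exists e, e \in flatten Ls.
  have : 0 < C * size Ls.
    by rewrite (leq_trans _ size_Ls) // divn_gt0 // size_Es Z_gtC ?(mem_subseq Y_sub).
  case: Ls Ls_large {sub_Ls Ls_col size_Ls Ls_Es} => [|[|e S] Ls] Ls_large; rewrite ?muln0 //.
    by have /exactly_large_neq0 := Ls_large _ (mem_head _ _).
  by exists e; rewrite /= mem_head.
apply: (IHBs ((j, e) :: A)).
- by move=> b Hb; apply: Bs_large; rewrite inE Hb orbT.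
- exact: subseq_trans (suffix_subseq _ _) (subseq_trans (subseq_cons _ _) Bs_sub).
- by rewrite /= j_new.
- move=> p; rewrite inE => /predU1P [-> /= | /A_col //].
  by rewrite Ls_col // (mem_subseq (subseq_trans sub_Ls Es_Y)).
- move=> p z; rewrite inE => /predU1P [-> /= Hz | Hp Hz].
    exact: (sorted_cat_rel ltn_trans (path_sorted sorted_DBs)) (Ls_Es _ e_Ls) Hz.
  by apply: A_lt => //; rewrite /= inE mem_cat Hz !orbT.
- by rewrite /= addnS.
Qed.

End Step.

Lemma mono_exactly_large m Bs : C < size Bs -> (forall b, b \in Bs -> exactly_large m b) ->
  subseq (flatten Bs) Z ->
  exists2 S, subseq S (flatten Bs) & exactly_large m S /\ {in S &, forall x y, col x = col y}.
Proof.
elim: m Bs => [|m IHm] Bs size_Bs Bs_large Bs_sub.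
  case: Bs size_Bs Bs_large {Bs_sub} => [|[|z [|w t]] Bs] // _ /(_ _ (mem_head _ _)) // _.
  exists [:: z]; first by rewrite sub1seq mem_head.
  by split => // x y; rewrite !inE => /eqP -> /eqP ->.
by apply: (@mono_witnesses m IHm _ Bs_sub Bs [::]); rewrite ?addn0.
Qed.

End Monochromatic.

Definition code (c : nat) (f : nat -> nat) (s : seq nat) : nat :=
  foldr (fun x n => f x + c * n) 0 s.

Lemma code_lt c f s : {in s, forall x, f x < c} -> code c f s < c ^ size s.
Proof.
elim: s => [|x s IHs] f_lt; first by [].
have Hs : code c f s < c ^ size s.
  by apply: IHs => y Hy; apply: f_lt; rewrite inE Hy orbT.
have fx : f x < c by apply: f_lt; rewrite mem_head.
rewrite expnS /=; apply: leq_trans (_ : c * (code c f s).+1 <= _); last by rewrite leq_mul2l Hs orbT.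
by rewrite mulnS -addSn leq_add2r.
Qed.

Lemma code_inj c f f' s : {in s, forall x, f x < c} -> {in s, forall x, f' x < c} ->
  code c f s = code c f' s -> {in s, f =1 f'}.
Proof.
elim: s => [|x s IHs] //= f_lt f'_lt.
have fx := f_lt x (mem_head _ _); have f'x := f'_lt x (mem_head _ _).
move=> Hcode; have fx_f'x : f x = f' x.
  have := congr1 (modn^~ c) Hcode.
  by rewrite /= (addnC (f x)) (addnC (f' x)) !(mulnC c) !modnMDl !modn_small.
move: Hcode; rewrite fx_f'x => /addnI /eqP; rewrite eqn_pmul2l ?(leq_ltn_trans _ f'x) // => /eqP Hs.
have tail_lt g : {in x :: s, forall z, g z < c} -> {in s, forall z, g z < c}.
  by move=> g_lt z Hz; apply: g_lt; rewrite inE Hz orbT.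
move=> y; rewrite inE => /predU1P [-> //|].
exact: IHs (tail_lt _ f_lt) (tail_lt _ f'_lt) Hs y.
Qed.

Lemma code_const c (f : nat -> nat -> nat) (s S : seq nat) : {in s & S, forall x y, f x y < c} ->
  {in S &, forall y y', code c (f^~ y) s = code c (f^~ y') s} ->
  {in s, forall x, {in S &, forall y y', f x y = f x y'}}.
Proof.
move=> f_lt Hcode x Hx y y' Hy Hy'.
by apply: (code_inj _ _ (Hcode y y' Hy Hy')) => // x' Hx'; apply: f_lt.
Qed.

Lemma constant_inP (T : eqType) (s : seq T) : reflect {in s &, forall x y, x = y} (constant s).
Proof.
case: s => [|x s] /=; first by left.
apply: (iffP allP) => [Hs y z | Hs y Hy].
  by rewrite !inE => /predU1P [-> | /Hs /eqP ->] /predU1P [-> | /Hs /eqP ->].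
by apply/eqP; apply: Hs; rewrite inE ?Hy ?orbT ?eqxx.
Qed.

Section Homogeneity.
Variable P : nat -> nat -> nat.

Definition homogeneous (F G : seq nat) : bool := constant [seq P x y | x <- F, y <- G].

Definition end_homogeneous (S S' : seq nat) : bool :=
  all (fun x => constant [seq P x y | y <- S']) S.

Lemma homogeneousP F G :
  reflect {in F &, forall x x', {in G &, forall y y', P x y = P x' y'}} (homogeneous F G).
Proof.
apply: (iffP (constant_inP _)) => [Hc x x' Hx Hx' y y' Hy Hy' | Hc].
  by apply: Hc; apply: allpairs_f.
by move=> _ _ /allpairsP [[x y] [/= Hx Hy ->]] /allpairsP [[x' y'] [/= Hx' Hy' ->]]; apply: Hc.
Qed.

Lemma end_homogeneousP S S' :
  reflect {in S, forall x, {in S' &, forall y y', P x y = P x y'}} (end_homogeneous S S').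
Proof.
apply: (iffP allP) => [Hc x Hx y y' Hy Hy' | Hc x Hx].
  by have /constant_inP := Hc x Hx; apply; apply: map_f.
by apply/constant_inP => _ _ /mapP [y Hy ->] /mapP [y' Hy' ->]; apply: Hc.
Qed.

Lemma homogeneous_sub F G F' G' :
  {subset F' <= F} -> {subset G' <= G} -> homogeneous F G -> homogeneous F' G'.
Proof.
move=> sub_F sub_G /homogeneousP Hc; apply/homogeneousP.
by move=> x x' /sub_F Hx /sub_F Hx' y y' /sub_G Hy /sub_G Hy'; apply: Hc.
Qed.

Lemma homogeneous_all2 F Fs Ss :
  all2 subseq Fs Ss -> all (homogeneous F) Ss -> all (homogeneous F) Fs.
Proof.
elim: Fs Ss => [|G Fs IHFs] [|S Ss] //= /andP [sub_G /IHFs sub_Fs] /andP [hS /sub_Fs ->].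
by rewrite andbT (homogeneous_sub _ (mem_subseq sub_G) hS).
Qed.

End Homogeneity.

Definition grouped (P : nat -> nat -> nat) (n : nat) (Y : seq nat) (Fs : seq (seq nat)) :=
  [/\ subseq (flatten Fs) Y, forall F, F \in Fs -> exactly_large n F
    & pairwise (homogeneous P) Fs].

Lemma sorted_leq_last (s : seq nat) x : sorted ltn s -> x \in s -> x <= last 0 s.
Proof.
case/lastP: s => [|s y] //; rewrite last_rcons -cats1 mem_cat inE => s_sorted.
case/orP => [Hx | /eqP -> //].
exact: ltnW (sorted_cat_rel ltn_trans s_sorted Hx (mem_head _ _)).
Qed.

Lemma grouped_head_last P n Y Fs :
  grouped P n Y Fs -> sorted ltn Y -> head 0 (map (last 0) Fs) <= last 0 Y.
Proof.
case: Fs => [|F Fs] [sub_Fs Fs_large _] Y_sorted //=.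
apply: sorted_leq_last Y_sorted (mem_subseq sub_Fs _).
by rewrite mem_cat last_in ?(exactly_large_neq0 (Fs_large F (mem_head _ _))).
Qed.

Lemma grouped_flatten P n Y (ps : seq (seq nat * seq (seq nat))) :
  subseq (flatten (map fst ps)) Y -> pairwise (homogeneous P) (map fst ps) ->
  (forall p, p \in ps -> grouped P n p.1 p.2) -> grouped P n Y (flatten (map snd ps)).
Proof.
move=> sub_Y ps_homog ps_grouped.
have sub_p p F : grouped P n p.1 p.2 -> F \in p.2 -> {subset F <= p.1}.
  by case=> sub_p _ _ HF z Hz; apply: (mem_subseq sub_p); apply/flattenP; exists F.
split.
- apply: subseq_trans sub_Y; elim: ps {ps_homog} ps_grouped => //= p ps IHps Hps.
  rewrite flatten_cat cat_subseq //; first by case: (Hps p (mem_head _ _)).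
  by apply: IHps => q Hq; apply: Hps; rewrite inE Hq orbT.
- by move=> F /flatten_mapP [p /ps_grouped [_ p_large _] /p_large].
elim: ps ps_homog ps_grouped {sub_Y} => // p ps IHps; rewrite map_cons pairwise_cons.
move=> /andP [p_homog ps_homog] Hps; have [_ _ p_pw] := Hps p (mem_head _ _).
have -> : flatten (map snd (p :: ps)) = p.2 ++ flatten (map snd ps) by [].
rewrite pairwise_cat p_pw IHps // => [|q Hq]; last by apply: Hps; rewrite inE Hq orbT.
rewrite !andbT; apply/allrelP => F G HF /flatten_mapP [q Hq HG].
apply: homogeneous_sub (allP p_homog q.1 (map_f _ Hq)).
  exact: sub_p (Hps p (mem_head _ _)) HF.
by apply: sub_p HG; apply: Hps; rewrite inE Hq orbT.
Qed.

Section Grouping.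
Variables (X : seq nat) (P : nat -> nat -> nat) (c : nat).
Hypothesis X_sorted : sorted ltn X.
Hypothesis c_gt1 : 1 < c.
Hypothesis c_le : {in X, forall z, c <= z}.
Hypothesis P_lt : {in X &, forall x y, x < y -> P x y < c}.
Hypothesis X_gap : {in X &, forall x y, x < y -> gap x <= y}.

Lemma X_notin0 : 0 \notin X.
Proof. by apply/negP => /c_le; rewrite leqNgt ltnW. Qed.

Lemma subseq_X_sorted s : subseq s X -> sorted ltn s.
Proof. by move/subseq_sorted; apply; [apply: ltn_trans | apply: X_sorted]. Qed.

Lemma subseq_X_lt s1 s2 : subseq (s1 ++ s2) X -> {in s1 & s2, forall x y, x < y}.
Proof. by move/subseq_X_sorted; apply: (sorted_cat_rel ltn_trans). Qed.

Lemma subseq_X_P s1 s2 : subseq (s1 ++ s2) X -> {in s1 & s2, forall x y, P x y < c}.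
Proof.
move=> sub x y Hx Hy; apply: P_lt; last exact: subseq_X_lt sub x y Hx Hy.
  by apply: (mem_subseq sub); rewrite mem_cat Hx.
by apply: (mem_subseq sub); rewrite mem_cat Hy orbT.
Qed.

Lemma color_palette M d k : M \in X -> d \in X -> M < d -> k <= M.+1 ->
  0 < c ^ k < d /\ c ^ k <= color_bound d.
Proof.
move=> MX dX Md kM; have c_gt0 : 0 < c := ltnW c_gt1.
have ck := expn_le_color_bound c_gt0 (c_le MX) kM.
split; last exact: leq_trans ck (color_bound_mono (ltnW Md)).
by rewrite expn_gt0 c_gt0 (leq_ltn_trans ck (leq_trans (color_bound_lt_gap M) (X_gap MX dX Md))).
Qed.

Lemma color_palette_prefix pre d : subseq (rcons pre d) X ->
  0 < c ^ size pre < d /\ c ^ size pre <= color_bound d.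
Proof.
move=> sub; have dX : d \in X by apply: (mem_subseq sub); rewrite mem_rcons mem_head.
case/lastP: pre sub => [|pre M] sub.
  by rewrite expn0 expn_gt0 (leq_trans c_gt1 (c_le dX)).
rewrite -cats1 in sub; have lt_d := subseq_X_lt sub.
have MX : M \in X by apply: (mem_subseq sub); rewrite mem_cat mem_rcons mem_head.
apply: (color_palette MX) => //; first by rewrite lt_d ?mem_rcons ?mem_head.
have sorted_preM := subseq_X_sorted (subseq_trans (prefix_subseq _ _) sub).
rewrite -(size_iota 0 M.+1); apply: uniq_leq_size.
  exact: (sorted_uniq ltn_trans ltnn).
move=> x Hx; rewrite mem_iota /= ltnS.
by have := sorted_leq_last sorted_preM Hx; rewrite last_rcons.
Qed.

Lemma mono_large_block m C col d t :
  exactly_large m.+1 (d :: t) -> subseq (d :: t) X -> 0 < C < d -> C <= color_bound d ->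
  {in t, forall z, col z < C} ->
  exists2 S, subseq S t & exactly_large m S /\ {in S &, forall x y, col x = col y}.
Proof.
move=> [Es [size_Es Et Es_large]] sub_dt /andP [C_gt0 C_d] C_cb col_lt; subst t.
have d_lt z : z \in flatten Es -> d < z.
  by move=> Hz; apply: (subseq_X_lt (s1 := [:: d]) sub_dt); rewrite ?mem_head.
have EsX z : z \in flatten Es -> z \in X.
  by move=> Hz; apply: (mem_subseq sub_dt); rewrite inE Hz orbT.
apply: (@mono_exactly_large C col (flatten Es)) => //.
- exact: path_sorted (subseq_X_sorted sub_dt).
- by move=> z /d_lt; apply: ltn_trans.
- move=> x y Hx Hy Hxy; apply: leq_trans (X_gap (EsX x Hx) (EsX y Hy) Hxy).
  rewrite leq_mul2r leq_exp2r // ltnS (leq_trans C_cb) ?orbT //.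
  exact: color_bound_mono (ltnW (d_lt x Hx)).
- by rewrite size_Es.
Qed.

Lemma mono_code_block m (f : nat -> nat -> nat) s d t :
  exactly_large m.+1 (d :: t) -> subseq (d :: t) X ->
  0 < c ^ size s < d -> c ^ size s <= color_bound d -> {in s & t, forall x z, f x z < c} ->
  exists2 S, subseq S t &
    exactly_large m S /\ {in s, forall x, {in S &, forall y y', f x y = f x y'}}.
Proof.
move=> dt_large sub_dt C_d C_cb f_lt.
have [S sub_S [S_large S_mono]] := mono_large_block (col := fun z => code c (f^~ z) s)
  dt_large sub_dt C_d C_cb (fun z Hz => code_lt (fun x Hx => f_lt x z Hx Hz)).
exists S => //; split => //; apply: code_const S_mono => x y Hx Hy.
exact: f_lt Hx (mem_subseq sub_S Hy).
Qed.

Lemma end_homogeneous_blocks m pre Es :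
  (forall E, E \in Es -> exactly_large m.+1 E) -> subseq (pre ++ flatten Es) X ->
  exists2 Ss, all2 subseq Ss Es &
    (forall S, S \in Ss -> exactly_large m S) /\ pairwise (end_homogeneous P) (pre :: Ss).
Proof.
elim: Es pre => [|E Es IHEs] pre Es_large sub_pre; first by exists [::].
have := Es_large E (mem_head _ _).
case: E Es_large sub_pre => [|e t] // Es_large sub_pre E_large.
rewrite /= -cat_cons in sub_pre.
have sub_pre_E : subseq (pre ++ e :: t) X.
  by apply: subseq_trans sub_pre; rewrite catA prefix_subseq.
have [C_e C_cb] : 0 < c ^ size pre < e /\ c ^ size pre <= color_bound e.
  apply: color_palette_prefix; apply: subseq_trans sub_pre_E.
  by rewrite -cats1 subseq_cat2l sub1seq mem_head.
have [S sub_S [S_large S_homog]] := mono_code_block E_large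
  (subseq_trans (suffix_subseq _ _) sub_pre_E) C_e C_cb
  (fun x z Hx Hz => subseq_X_P sub_pre_E Hx (mem_behead (s := e :: t) Hz)).
have [||Ss all_Ss [Ss_large Ss_eh]] := IHEs (pre ++ S).
- by move=> E HE; apply: Es_large; rewrite inE HE orbT.
- apply: subseq_trans sub_pre.
  by rewrite -!catA subseq_cat2l subseq_cat2r (subseq_trans sub_S (subseq_cons _ _)).
exists (S :: Ss); first by apply/andP; split; first exact: subseq_trans sub_S (subseq_cons _ _).
split; first by move=> S'; rewrite inE => /predU1P [-> | /Ss_large].
move: Ss_eh; rewrite pairwise_cons => /andP [preS_eh Ss_eh].
have /andP [pre_eh S_eh] : all (end_homogeneous P pre) Ss && all (end_homogeneous P S) Ss.
  by rewrite -all_predI; apply: sub_all preS_eh => S'; rewrite /end_homogeneous all_cat.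
by rewrite !pairwise_cons /= pre_eh S_eh Ss_eh !andbT; apply/end_homogeneousP.
Qed.

Lemma homogenize n h Ss :
  (forall S, S \in Ss -> exactly_large n.+1 S) -> subseq (h :: flatten Ss) X -> size Ss <= h.+1 ->
  pairwise (end_homogeneous P) Ss ->
  exists2 Fs, all2 subseq Fs Ss &
    (forall F, F \in Fs -> exactly_large n F) /\ pairwise (homogeneous P) Fs.
Proof.
elim: Ss => [|S Ss IHSs] Ss_large sub_h; first by exists [::].
rewrite ltnS pairwise_cons => size_Ss /andP [S_eh Ss_eh].
have := Ss_large S (mem_head _ _).
case: S Ss_large sub_h S_eh => [|r t] // Ss_large sub_h S_eh S_large.
have sub_S : subseq ((r :: t) ++ flatten Ss) X := subseq_trans (subseq_cons _ _) sub_h.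
have [hX rX] : h \in X /\ r \in X by split; apply: (mem_subseq sub_h); rewrite !inE eqxx ?orbT.
have h_r : h < r by apply: (subseq_X_lt (s1 := [:: h]) sub_h); rewrite ?mem_head.
have head_in S' : S' \in Ss -> head 0 S' \in S'.
  by move=> HS'; apply/head_in/exactly_large_neq0/Ss_large; rewrite inE HS' orbT.
set heads := map (head 0) Ss.
have [C_r C_cb] : 0 < c ^ size heads < r /\ c ^ size heads <= color_bound r.
  by apply: (color_palette hX rX h_r); rewrite size_map (leq_trans size_Ss).
have t_P u z : u \in heads -> z \in t -> P z u < c.
  move=> /mapP [S' HS' ->] Hz; apply: (subseq_X_P sub_S); first by rewrite inE Hz orbT.
  by apply/flattenP; exists S'; rewrite ?head_in.
have [F sub_F [F_large F_homog]] := mono_code_block (f := fun u z => P z u) (s := heads)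
  S_large (subseq_trans (prefix_subseq _ _) sub_S) C_r C_cb t_P.
have [||Fs all_Fs [Fs_large Fs_homog]] := IHSs _ _ (leqW size_Ss) Ss_eh.
- by move=> S' HS'; apply: Ss_large; rewrite inE HS' orbT.
- by apply: subseq_trans sub_h; rewrite subseq_cons2 suffix_subseq.
exists (F :: Fs); first by apply/andP; split; first exact: subseq_trans sub_F (subseq_cons _ _).
split; first by move=> F'; rewrite inE => /predU1P [-> | /Fs_large].
rewrite pairwise_cons Fs_homog andbT; apply: homogeneous_all2 all_Fs _.
apply/allP => S' HS'; apply/homogeneousP => x x' Hx Hx' y y' Hy Hy'.
have /end_homogeneousP S'_eh := allP S_eh S' HS'.
have [xS x'S] : x \in r :: t /\ x' \in r :: t by rewrite !inE !(mem_subseq sub_F) ?orbT.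
rewrite (S'_eh x xS y (head 0 S')) ?(S'_eh x' x'S y' (head 0 S')) ?head_in //.
exact: F_homog (map_f _ HS') x x' Hx Hx'.
Qed.

Lemma grouping_below n h W : exactly_large n.+3 W -> subseq (h :: W) X ->
  exists2 Fs, size Fs = h & grouped P n W Fs.
Proof.
case: W => [|w t] // [Es [size_Es Et Es_large]] sub_hW; subst t.
have h_w : h < w by apply: (subseq_X_lt (s1 := [:: h]) sub_hW); rewrite ?mem_head.
set Es' := take h Es.
have sub_Es' : subseq (flatten Es') (w :: flatten Es).
  exact: subseq_trans (subseq_flatten (take_subseq _ _)) (subseq_cons _ _).
have [||Ss all_Ss [Ss_large Ss_eh]] := @end_homogeneous_blocks n.+1 [::] Es'.
- by move=> E /mem_take; apply: Es_large.
- exact: subseq_trans sub_Es' (subseq_trans (subseq_cons _ _) sub_hW).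
have size_Ss : size Ss = h by rewrite (size_all2 all_Ss) size_takel // size_Es ltnW.
have sub_Ss : subseq (flatten Ss) (w :: flatten Es).
  exact: subseq_trans (subseq_flatten_all2 all_Ss) sub_Es'.
have [|||Fs all_Fs [Fs_large Fs_homog]] := @homogenize n h Ss Ss_large.
- by apply: subseq_trans sub_hW; rewrite subseq_cons2.
- by rewrite size_Ss.
- by move: Ss_eh; rewrite pairwise_cons => /andP [].
exists Fs; first by rewrite (size_all2 all_Fs).
by split=> //; apply: subseq_trans (subseq_flatten_all2 all_Fs) sub_Ss.
Qed.

Lemma homogeneous_pair n y D1 D2 :
  exactly_large n.+4 D1 -> exactly_large n.+4 D2 -> subseq (y :: D1 ++ D2) X ->
  exists F, exists2 W, subseq F D1 /\ subseq W D2 &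
    [/\ exactly_large n F, exactly_large n.+3 W & homogeneous P F W].
Proof.
case: D1 D2 => [|d1 t1] [|d2 t2] // D1_large D2_large sub_Y.
set D1 := d1 :: t1 in D1_large sub_Y *; set D2 := d2 :: t2 in D2_large sub_Y *.
have sub_D : subseq (D1 ++ D2) X := subseq_trans (subseq_cons _ _) sub_Y.
have D_P := subseq_X_P sub_D.
have t1_D1 : {subset t1 <= D1} by move=> z Hz; rewrite inE Hz orbT.
have t2_D2 : {subset t2 <= D2} by move=> z Hz; rewrite inE Hz orbT.
have [C_d2 C_cb] : 0 < c ^ size D1 < d2 /\ c ^ size D1 <= color_bound d2.
  apply: color_palette_prefix; apply: subseq_trans sub_D.
  by rewrite -cats1 subseq_cat2l sub1seq mem_head.
have [W sub_W [W_large W_homog]] := mono_code_block D2_large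
  (subseq_trans (suffix_subseq _ _) sub_D) C_d2 C_cb (fun x z Hx Hz => D_P x z Hx (t2_D2 z Hz)).
have W_D2 : {subset W <= D2} by move=> z /(mem_subseq sub_W)/t2_D2.
have w0_W : head 0 W \in W := head_in 0 (exactly_large_neq0 W_large).
have [yX d1X] : y \in X /\ d1 \in X by split; apply: (mem_subseq sub_Y); rewrite !inE ?eqxx ?orbT.
have y_d1 : y < d1 by apply: (subseq_X_lt (s1 := [:: y]) sub_Y); rewrite ?mem_head.
have [c_d1 c_cb] := color_palette yX d1X y_d1 (isT : 1 <= y.+1).
have P_w0 u z : u \in [:: head 0 W] -> z \in t1 -> P z u < c.
  by rewrite inE => /eqP -> Hz; apply: D_P; [apply: t1_D1 | apply: W_D2].
have [F' sub_F' [F'_large F'_homog]] := mono_code_block (f := fun u z => P z u) (s := [:: head 0 W])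
  D1_large (subseq_trans (prefix_subseq _ _) sub_D) c_d1 c_cb P_w0.
have F'_D1 : {subset F' <= D1} by move=> z /(mem_subseq sub_F')/t1_D1.
have F'_pos : 0 \notin F'.
  by apply: contra X_notin0 => /F'_D1 D1_0; apply: (mem_subseq sub_D); rewrite mem_cat D1_0.
rewrite -addn3 in F'_large; have [F F_large sub_F] := exactly_large_subseq F'_large F'_pos.
exists F, W; first by split; apply: subseq_trans (subseq_cons _ _);
  [exact: subseq_trans sub_F sub_F' | exact: sub_W].
split=> //; apply/homogeneousP => x x' Hx Hx' z z' Hz Hz'.
have [xF' x'F'] := (mem_subseq sub_F Hx, mem_subseq sub_F Hx').
rewrite (W_homog x _ z (head 0 W)) ?(W_homog x' _ z' (head 0 W)) ?F'_D1 //.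
exact: F'_homog (mem_head _ _) x x' xF' x'F'.
Qed.

Lemma grouping_omega n Y : exactly_large (n + 5) Y -> subseq Y X ->
  exists2 Fs, grouped P n Y Fs & exactly_large 1 (map (last 0) Fs).
Proof.
rewrite addnS addn4; case: Y => [|y t] // [Ds [size_Ds Dt Ds_large]] sub_Y; subst t.
have y_gt1 : 1 < y by apply: leq_trans c_gt1 (c_le (mem_subseq sub_Y (mem_head _ _))).
case: Ds size_Ds Ds_large sub_Y => [|D1 [|D2 Ds]] size_Ds Ds_large sub_Y;
  try by rewrite -size_Ds in y_gt1.
have sub_D : subseq (D1 ++ D2) (flatten [:: D1, D2 & Ds]) by rewrite /= catA prefix_subseq.
have [|||F [W [sub_F sub_W] [F_large W_large FW]]] := @homogeneous_pair n y D1 D2.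
- by apply: Ds_large; rewrite mem_head.
- by apply: Ds_large; rewrite !inE eqxx orbT.
- by apply: subseq_trans sub_Y; rewrite subseq_cons2.
have sub_DX : subseq (D1 ++ D2) X := subseq_trans sub_D (subseq_trans (subseq_cons _ _) sub_Y).
have h_D1 : last 0 F \in D1 by apply: (mem_subseq sub_F); apply/last_in/(exactly_large_neq0 F_large).
have sub_hW : subseq (last 0 F :: W) X.
  have WX := subseq_trans sub_W (subseq_trans (suffix_subseq _ _) sub_DX).
  apply: (sorted_subset_subseq ltn_trans ltnn) => //.
    rewrite /= path_sortedE ?subseq_X_sorted ?andbT //; last exact: ltn_trans.
    by apply/allP => z /(mem_subseq sub_W) Hz; apply: (subseq_X_lt sub_DX).
  move=> z; rewrite inE => /predU1P [-> | /(mem_subseq WX) //].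
  by apply: (mem_subseq sub_DX); rewrite mem_cat h_D1.
have [Fs size_Fs [sub_Fs Fs_large Fs_homog]] := grouping_below W_large sub_hW.
exists (F :: Fs); last by have := exactly_large1 (map (last 0) Fs); rewrite size_map size_Fs.
split.
- apply: subseq_trans (subseq_cons _ _); apply: subseq_trans sub_D.
  exact: cat_subseq sub_F (subseq_trans sub_Fs sub_W).
- by move=> F'; rewrite inE => /predU1P [-> | /Fs_large].
rewrite pairwise_cons Fs_homog andbT; apply/allP => G HG.
by apply: homogeneous_sub FW => // z Hz; apply: (mem_subseq sub_Fs); apply/flattenP; exists G.
Qed.

Lemma grouping_exactly_large k n Y : exactly_large (n + 6 * k) Y -> subseq Y X ->
  exists2 Fs, grouped P n Y Fs & exactly_large k (map (last 0) Fs).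
Proof.
elim: k n Y => [|k IHk] n Y.
  rewrite muln0 addn0 => Y_large sub_Y; exists [:: Y] => //.
  by split; rewrite /= ?cats0 // => F; rewrite inE => /eqP ->.
rewrite mulnS addnA => Y_large sub_Y.
have [Gs [sub_Gs Gs_large Gs_homog] Gs_k] := IHk (n + 6) Y Y_large sub_Y.
have GX G : G \in Gs -> subseq G X.
  by move=> HG; apply: subseq_trans (mem_subseq_flatten HG) (subseq_trans sub_Gs sub_Y).
have [|ps ps_Gs Hps] := @pair_choice _ _
    (fun G Fs => grouped P n G Fs /\ exactly_large 1 (map (last 0) Fs)) Gs.
  move=> G HG; have := Gs_large G HG; rewrite -[6]/(5 + 1) addnA => G_large.
  have G_pos : 0 \notin G := contra (@mem_subseq _ _ _ (GX G HG) 0) X_notin0.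
  have [T T_large sub_T] := exactly_large_subseq G_large G_pos.
  have [Fs [sub_Fs Fs_large Fs_homog] Fs_1] := grouping_omega T_large (subseq_trans sub_T (GX G HG)).
  by exists Fs; split => //; split => //; apply: subseq_trans sub_T.
set Fam := flatten (map snd ps).
have [sub_Fam Fam_large Fam_homog] : grouped P n Y Fam.
  by apply: grouped_flatten; rewrite ?ps_Gs // => p /Hps [].
have [||t sub_t t_large] := @exactly_large_concat k [seq (last 0 p.1, map (last 0) p.2) | p <- ps].
- suff -> : [seq q.1 | q <- [seq (last 0 p.1, map (last 0) p.2) | p <- ps]] = map (last 0) Gs by [].
  by rewrite -ps_Gs -!map_comp.
- move=> _ /mapP [p Hp ->]; have [p_grouped p_1] := Hps p Hp; split => //.
  by apply: grouped_head_last p_grouped _; apply/subseq_X_sorted/GX; rewrite -ps_Gs map_f.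
have lasts_Fam : flatten [seq q.2 | q <- [seq (last 0 p.1, map (last 0) p.2) | p <- ps]] =
    map (last 0) Fam by rewrite /Fam map_flatten -!map_comp.
move: sub_t t_large; rewrite lasts_Fam => /subseqP [m _ ->] t_large.
exists (mask m Fam); last by rewrite map_mask.
split; last exact: pairwise_mask.
- exact: subseq_trans (subseq_flatten (mask_subseq _ _)) sub_Fam.
- by move=> F /mem_mask; apply: Fam_large.
Qed.

End Grouping.

Lemma sorted_flatten_nth (Fs : seq (seq nat)) i j : sorted ltn (flatten Fs) -> i < j < size Fs ->
  {in nth [::] Fs i & nth [::] Fs j, forall x y, x < y}.
Proof.
move=> Fs_sorted /andP [ij j_lt] x y Hx Hy.
rewrite -(cat_take_drop j Fs) flatten_cat in Fs_sorted.
apply: (sorted_cat_rel ltn_trans Fs_sorted); apply/flattenP.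
  by exists (nth [::] Fs i); rewrite // -(nth_take _ ij) mem_nth // size_takel // ltnW.
by exists (nth [::] Fs j); rewrite // -[j in nth _ _ j]addn0 -nth_drop mem_nth // size_drop subn_gt0.
Qed.

Lemma grouping_of_grouped P n k X Fs : sorted ltn X -> grouped P n X Fs ->
  large (opow k) (map (last 0) Fs) -> grouping (opow n) (opow k) X P Fs.
Proof.
move=> X_sorted [sub_Fs Fs_large Fs_homog] lasts_large.
have Fs_sorted : sorted ltn (flatten Fs) := (subseq_sorted ltn_trans) _ _ sub_Fs X_sorted.
have nth_nonempty i : i < size Fs -> nth [::] Fs i != [::].
  by move=> Hi; apply: exactly_large_neq0 (Fs_large _ (mem_nth _ Hi)).
split; [|split; [|split]] => //.
- move=> i Hi; have sub_i := mem_subseq_flatten (mem_nth [::] Hi).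
  split; first exact: (subseq_sorted ltn_trans) sub_i Fs_sorted.
  split; first exact/mem_subseq/(subseq_trans sub_i sub_Fs).
  by rewrite nth_nonempty //; split=> //; apply/exactly_large_large/Fs_large/mem_nth.
- move=> i j Hij; have /andP [ij j_lt] := Hij.
  by apply: (sorted_flatten_nth Fs_sorted Hij); [apply: last_in | apply: head_in];
    apply: nth_nonempty; rewrite // (ltn_trans ij).
- move=> i j /andP [ij j_lt] x x' y y' Hx Hx' Hy Hy'.
  have /(pairwiseP [::]) Fs_pw := Fs_homog.
  by have /homogeneousP := Fs_pw i j (ltn_trans ij j_lt) j_lt ij; apply.
Qed.

Theorem mainTheorem16 (n k : nat) (X : seq nat) :
  fin_set X ->
  large (opow (n + 6 * k)) X ->
  sparse (opow 3) X ->
  admits_grouping (opow n) (opow k) (head 0 X) X.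
Proof.
move=> X_sorted X_large X_sparse P P_lt.
have [p [r [X_pr p_large]]] := large_exactly_prefix X_large.
have [c_gt3 c_min] : 3 < head 0 X /\ {in X, forall z, head 0 X <= z}.
  case: X X_pr X_sorted X_sparse {X_large P_lt} => [|x X'] X_pr X_sorted [X_gt3 _].
    by move: (exactly_large_neq0 p_large); case: p X_pr {p_large}.
  split=> [|z]; first exact: X_gt3 (mem_head _ _).
  rewrite inE => /predU1P [-> // | /(allP (order_path_min ltn_trans X_sorted))].
  exact: ltnW.
have sub_p : subseq p X by rewrite X_pr prefix_subseq.
have [Fs [sub_Fs Fs_large Fs_homog] Fs_k] := grouping_exactly_large X_sorted
  (ltn_trans (isT : 1 < 3) c_gt3) c_min P_lt (sparse3_gap X_sparse) p_large sub_p.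
exists Fs; apply: grouping_of_grouped X_sorted _ (exactly_large_large Fs_k).
by split=> //; apply: subseq_trans sub_Fs sub_p.
Qed.
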